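(* Let $\Lambda=\{z:\operatorname{Im}z>0\}$. For an integer $n\ge0$ let $\Omega_n=\{(p,q)\in\mathbb Z^2: 0\le p\le n,\ 0\le q\le n,\ (p,q)\ne(n,n)\}$, let $\mathcal A_n$ be the complex linear span of the functions $\frac{z^p\,\overline z^{\,q}}{(z-\overline z)^n}$, $(p,q)\in\Omega_n$, and $\mathcal A=\sum_{n\ge0}\mathcal A_n$. Let $\mathcal B$ be the space of all differential operators on $\Lambda$ that are finite sums of the form $$\sum_{\alpha,\beta,\gamma,\alpha',\beta',\gamma'\ge0}V_{\alpha,\beta,\gamma,\alpha',\beta',\gamma'}(z,\overline z)\Bigl(z^2\tfrac{\partial}{\partial z}\Bigr)^{\alpha}\Bigl(z\tfrac{\partial}{\partial z}\Bigr)^{\beta}\Bigl(\tfrac{\partial}{\partial z}\Bigr)^{\gamma}\Bigl(\overline z^{\,2}\tfrac{\partial}{\partial \overline z}\Bigr)^{\alpha'}\Bigl(\overline z\tfrac{\partial}{\partial \overline z}\Bigr)^{\beta'}\Bigl(\tfrac{\partial}{\partial \overline z}\Bigr)^{\gamma'},$$ with coefficients $V_{\alpha,\beta,\gamma,\alpha',\beta',\gamma'}\in\mathcal A$ (acting as multiplication operators). Then $\mathcal B$ is a subalgebra of the algebra of all differential operators on $\Lambda$, and $\mathcal B$ is generated (as an algebra) by the operators $$\frac{1}{z-\overline z},\quad z^2\frac{\partial}{\partial z},\quad z\frac{\partial}{\partial z},\quad \frac{\partial}{\partial z},\quad \overline z^{\,2}\frac{\partial}{\partial\overline z},\quad \overline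 z\frac{\partial}{\partial\overline z},\quad \frac{\partial}{\partial\overline z}.$$
   Context: $\frac{\partial}{\partial z}$, $\frac{\partial}{\partial\overline z}$ are the Wirtinger derivatives on $\Lambda$; $\frac1{z-\overline z}$ denotes the operator of multiplication by this function. *)

(* Algebraic model of differential operators on the upper
   half plane with rational coefficients in z and zbar. *)
From HB Require Import structures.
From mathcomp Require Import all_boot all_order all_algebra.
From mathcomp Require Import complex.
Set Implicit Arguments. Unset Strict Implicit. Unset Printing Implicit Defensive.
Import Order.TTheory GRing.Theory Num.Theory.
Local Open Scope ring_scope.

Section WeylModel.
Variable R : rcfType.
Local Notation C := (R[i])%C.

(* Polynomials in two independent variables: the outer variable is z,
   the inner (coefficient) variable is w = zbar. *)
Definition Pol := {poly {poly C}}.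
Definition Kf := {fraction Pol}.

Definition polZ : Pol := 'X.
Definition polW : Pol := ('X : {poly C})%:P.
Definition Zf : Kf := tofrac polZ.
Definition Wf : Kf := tofrac polW.
Definition cst (c : C) : Kf := tofrac ((c%:P)%:P).

Definition pdz (p : Pol) : Pol := deriv p.
Definition pdw (p : Pol) : Pol := map_poly (@deriv _) p.

(* quotient rule on a representative (independent of the representative) *)
Definition fderiv (d : Pol -> Pol) (f : Kf) : Kf :=
  let x := repr f in
  tofrac (d (\n_x) * \d_x - \n_x * d (\d_x)) / tofrac (\d_x ^+ 2).

Definition dz : Kf -> Kf := fderiv pdz.
Definition dzb : Kf -> Kf := fderiv pdw.

Definition Op := Kf -> Kf.
Definition mulop (a : Kf) : Op := fun f => a * f.
Definition op_add (D1 D2 : Op) : Op := fun f => D1 f + D2 f.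
Definition op_scale (c : C) (D : Op) : Op := fun f => cst c * D f.
Definition op_comp (D1 D2 : Op) : Op := fun f => D1 (D2 f).
Definition op_id : Op := fun f => f.

Inductive alg_gen (G : Op -> Prop) : Op -> Prop :=
| ag_base D : G D -> alg_gen G D
| ag_id : alg_gen G op_id
| ag_add D1 D2 : alg_gen G D1 -> alg_gen G D2 -> alg_gen G (op_add D1 D2)
| ag_scale c D : alg_gen G D -> alg_gen G (op_scale c D)
| ag_comp D1 D2 : alg_gen G D1 -> alg_gen G D2 -> alg_gen G (op_comp D1 D2).

Definition is_diffop (D : Op) : Prop :=
  alg_gen (fun E => (exists a, E = mulop a) \/ E = dz \/ E = dzb) D.

Definition in_An (n : nat) (V : Kf) : Prop :=
  exists c : nat -> nat -> C,
    V = \sum_(p < n.+1) \sum_(q < n.+1 | ((p : nat), (q : nat)) != (n, n))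
          cst (c p q) * (Zf ^+ p * Wf ^+ q / (Zf - Wf) ^+ n).

Definition in_A (V : Kf) : Prop :=
  exists (N : nat) (Vs : nat -> Kf),
    (forall n, in_An n (Vs n)) /\ V = \sum_(n < N) Vs n.

Definition L1 : Op := fun f => Zf ^+ 2 * dz f.
Definition L2 : Op := fun f => Zf * dz f.
Definition L3 : Op := dz.
Definition L1b : Op := fun f => Wf ^+ 2 * dzb f.
Definition L2b : Op := fun f => Wf * dzb f.
Definition L3b : Op := dzb.

Definition monomial_op (a b g a' b' g' : nat) : Op :=
  fun f => iter a L1 (iter b L2 (iter g L3
             (iter a' L1b (iter b' L2b (iter g' L3b f))))).

Definition in_B (D : Op) : Prop :=
  exists s : seq (nat * nat * nat * nat * nat * nat * Kf),
    (forall t, t \in s -> in_A t.2) /\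
    D = fun f => \sum_(t <- s)
          t.2 * monomial_op t.1.1.1.1.1.1 t.1.1.1.1.1.2 t.1.1.1.1.2
                            t.1.1.1.2 t.1.1.2 t.1.2 f.

Definition B_gens (D : Op) : Prop :=
  D = mulop (1 / (Zf - Wf)) \/ D = L1 \/ D = L2 \/ D = L3 \/
  D = L1b \/ D = L2b \/ D = L3b.

End WeylModel.

From HB Require Import structures.
From mathcomp Require Import all_boot all_order all_algebra.
From mathcomp Require Import complex.
From mathcomp Require Import ring zify.
From Stdlib Require Import FunctionalExtensionality.
Set Implicit Arguments. Unset Strict Implicit. Unset Printing Implicit Defensive.
Import Order.TTheory GRing.Theory Num.Theory.
Local Open Scope ring_scope.

(* Write u = 1 / (z - zbar).  The space A is spanned by the monomials
   z^p zbar^q u^n with p, q <= n (the excluded monomial with p = q = n is the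
   difference of two admissible monomials of level n + 1); it is a ring, and
   each of the six vector fields z^2 d, z d, d, zbar^2 dbar, zbar dbar, dbar is
   a derivation mapping A into itself.  For each variable the three fields
   satisfy sl2-type commutation relations, so every product of them is a
   linear combination of ordered words, and barred fields commute with
   unbarred ones.  Hence B is stable under left composition with each of the
   seven generators, so it contains the algebra they generate.  Conversely,
   the commutator of a vector field L with multiplication by V is
   multiplication by L(V); starting from u this yields multiplication by
   (zu)^2, (zbar u)^2, hence by zu, zbar u = zu - 1 and z zbar u, which
   generate A as a ring.  So the generated algebra contains every
   multiplication by an element of A, and with it all of B. *)

Record derivation (F : comRingType) (de : F -> F) : Prop := Derivation {
  derivationD : {morph de : a b / a + b};
  derivationM : forall a b, de (a * b) = de a * b + a * de b }.

Section DerivationTheory.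
Variables (F : comRingType) (de : F -> F).
Hypothesis hde : derivation de.
Let deD := derivationD hde.
Let deM := derivationM hde.

Lemma derivation0 : de 0 = 0.
Proof. by apply: (@addrI _ (de 0)); rewrite -deD !addr0. Qed.

Lemma derivationN a : de (- a) = - de a.
Proof. by apply/eqP; rewrite -addr_eq0 -deD addNr derivation0. Qed.

Lemma derivationB a b : de (a - b) = de a - de b.
Proof. by rewrite deD derivationN. Qed.

Lemma derivationMn a k : de (a *+ k) = de a *+ k.
Proof. by elim: k => [|k IH]; rewrite ?derivation0 // !mulrS deD IH. Qed.

Lemma derivation1 : de 1 = 0.
Proof.
have E := deM 1 1; rewrite !mul1r mulr1 in E.
by apply: (@addIr _ (de 1)); rewrite add0r -E.
Qed.

Lemma derivationX a k : de (a ^+ k) = a ^+ k.-1 * de a *+ k.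
Proof.
elim: k => [|k IH]; first by rewrite expr0 derivation1.
rewrite exprS deM IH.
case: k {IH} => [|k] /=; first by rewrite expr0 mulr0n mulr0 addr0 mul1r mulr1.
by rewrite mulrnAr mulrA -exprS [de a * _]mulrC -mulrS.
Qed.

Lemma derivation_mull A : derivation (fun f => A * de f).
Proof. by split=> a b; rewrite ?deD ?deM; ring. Qed.

Lemma derivation_const_mul c a : de c = 0 -> de (c * a) = c * de a.
Proof. by move=> dc; rewrite deM dc mul0r add0r. Qed.

Section EulerQuad.
Variable z : F.
Hypothesis dez : de z = 1.

Definition euler_op f := z * de f.
Definition quad_op f := z ^+ 2 * de f.

Lemma euler_quad f : euler_op (quad_op f) = quad_op (euler_op f) + quad_op f.
Proof. by rewrite /euler_op /quad_op !deM dez; ring. Qed.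

Lemma deriv_euler f : de (euler_op f) = euler_op (de f) + de f.
Proof. by rewrite /euler_op deM dez; ring. Qed.

Lemma deriv_quad f : de (quad_op f) = quad_op (de f) + euler_op f *+ 2.
Proof. by rewrite /euler_op /quad_op !deM dez; ring. Qed.

End EulerQuad.
End DerivationTheory.

Lemma derivationV (F : fieldType) (de : F -> F) a :
  derivation de -> a != 0 -> de a^-1 = - a^-2 * de a.
Proof.
move=> hde a0; have := derivationM hde a a^-1.
rewrite mulfV // derivation1 // => /esym/eqP; rewrite addr_eq0 => /eqP Ea.
by apply: (mulfI a0); rewrite -[a * _]opprK -Ea; field.
Qed.

Lemma derivation_commutator (F : comRingType) (d1 d2 : F -> F) :
  derivation d1 -> derivation d2 -> derivation (fun f => d1 (d2 f) - d2 (d1 f)).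
Proof.
move=> [d1D d1M] [d2D d2M]; split=> a b; first by rewrite d2D d1D d1D d2D; ring.
by rewrite d2M d1M d1D d1M d1M d2D d2M d2M; ring.
Qed.

Section QuotientRule.
Variable F : fieldType.

Definition quotient_rule (n dn m dm : F) := (dn * m - n * dm) / m ^+ 2.

Lemma quotient_rule_compat n dn m dm n' dn' m' dm' :
  m != 0 -> m' != 0 -> n * m' = n' * m -> dn * m' + n * dm' = dn' * m + n' * dm ->
  quotient_rule n' dn' m' dm' = quotient_rule n dn m dm.
Proof.
rewrite /quotient_rule => m0 m'0 E dE.
have -> : dn' = (dn * m' + n * dm' - n' * dm) / m by rewrite dE addrK mulfK.
have -> : n' = n * m' / m by rewrite E mulfK.
by field; rewrite m0 m'0.
Qed.

Lemma quotient_ruleD n1 dn1 m1 dm1 n2 dn2 m2 dm2 : m1 != 0 -> m2 != 0 ->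
  quotient_rule (n1 * m2 + n2 * m1) (dn1 * m2 + n1 * dm2 + (dn2 * m1 + n2 * dm1))
                (m1 * m2) (dm1 * m2 + m1 * dm2)
  = quotient_rule n1 dn1 m1 dm1 + quotient_rule n2 dn2 m2 dm2.
Proof. by rewrite /quotient_rule => m10 m20; field; rewrite m10 m20. Qed.

Lemma quotient_ruleM n1 dn1 m1 dm1 n2 dn2 m2 dm2 : m1 != 0 -> m2 != 0 ->
  quotient_rule (n1 * n2) (dn1 * n2 + n1 * dn2) (m1 * m2) (dm1 * m2 + m1 * dm2)
  = quotient_rule n1 dn1 m1 dm1 * (n2 / m2) + n1 / m1 * quotient_rule n2 dn2 m2 dm2.
Proof. by rewrite /quotient_rule => m10 m20; field; rewrite m10 m20. Qed.

Lemma quotient_rule_const n dn : quotient_rule n dn 1 0 = dn.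
Proof. by rewrite /quotient_rule mulr0 subr0 mulr1 expr1n divr1. Qed.

End QuotientRule.

Section FractionDerivation.
Context {R : rcfType}.
Local Notation Pol := (Pol R).
Local Notation Kf := (Kf R).

Lemma frac_numden (f : Kf) : f = tofrac \n_(repr f) / tofrac \d_(repr f).
Proof.
have dx0 : tofrac \d_(repr f) != 0 :> Kf by rewrite tofrac_eq0 denom_ratioP.
apply: (mulIf dx0); rewrite mulfVK // -{1}[f]reprK; set x := repr f.
unlock tofrac.
transitivity (FracField.mul (\pi_Kf x)%qT (\pi_Kf (Ratio \d_x 1))%qT); first by [].
rewrite -FracField.pi_mul; apply/eqmodP.
rewrite /= FracField.equivfE /FracField.mulf /=.
rewrite !numden_Ratio ?mulf_neq0 ?oner_neq0 ?denom_ratioP //.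
by rewrite !mulr1 mulrC.
Qed.

Lemma fracW (P : Kf -> Prop) :
  (forall n m, m != 0 -> P (tofrac n / tofrac m)) -> forall f, P f.
Proof. by move=> Pnm f; rewrite [f]frac_numden; apply: Pnm; exact: denom_ratioP. Qed.

Lemma frac_derivation_eq0 (e : Kf -> Kf) :
  derivation e -> (forall p, e (tofrac p) = 0) -> forall f, e f = 0.
Proof.
move=> he e0; elim/fracW=> n m m0; set M := tofrac m.
have M0 : M != 0 by rewrite tofrac_eq0.
have := derivationM he (tofrac n / M) M.
rewrite mulfVK // !e0 mulr0 addr0 => /esym/eqP.
by rewrite mulf_eq0 (negbTE M0) orbF => /eqP.
Qed.

Variable d : Pol -> Pol.
Hypothesis hd : derivation d.

Lemma fderiv_frac n m : m != 0 ->
  fderiv d (tofrac n / tofrac m)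
  = quotient_rule (tofrac n) (tofrac (d n)) (tofrac m) (tofrac (d m)).
Proof.
move=> m0; rewrite /fderiv; have := frac_numden (tofrac n / tofrac m).
move: (repr _) => x; have := denom_ratioP x; move: \n_x \d_x => n' m' m'0 Ex.
have M0 : tofrac m != 0 :> Kf by rewrite tofrac_eq0.
have M'0 : tofrac m' != 0 :> Kf by rewrite tofrac_eq0.
have E : n * m' = n' * m.
  by apply/eqP; rewrite -tofrac_eq !tofracM -(eqr_div _ _ M0 M'0) Ex.
have dE : d n * m' + n * d m' = d n' * m + n' * d m by rewrite -!(derivationM hd) E.
move/(congr1 (@tofrac _)): E; move/(congr1 (@tofrac _)): dE.
rewrite !tofracB !tofracD !tofracXn !tofracM => dE E.
exact: quotient_rule_compat M0 M'0 E dE.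
Qed.

Lemma fderiv_tofrac p : fderiv d (tofrac p) = tofrac (d p).
Proof.
have -> : tofrac p = tofrac p / tofrac 1 :> Kf by rewrite tofrac1 divr1.
rewrite fderiv_frac ?oner_neq0 // tofrac1 derivation1 // (rmorph0 (@tofrac Pol)).
exact: quotient_rule_const.
Qed.

Lemma fderivD (a b : Kf) : fderiv d (a + b) = fderiv d a + fderiv d b.
Proof.
elim/fracW: a => n1 m1 m1_0; elim/fracW: b => n2 m2 m2_0.
have M1 : tofrac m1 != 0 :> Kf by rewrite tofrac_eq0.
have M2 : tofrac m2 != 0 :> Kf by rewrite tofrac_eq0.
rewrite (addf_div _ _ M1 M2) -!tofracM -tofracD !fderiv_frac ?mulf_neq0 //.
by rewrite (derivationD hd) !(derivationM hd) !tofracD !tofracM (quotient_ruleD _ _ _ _ _ _ M1 M2).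
Qed.

Lemma fderivM (a b : Kf) : fderiv d (a * b) = fderiv d a * b + a * fderiv d b.
Proof.
elim/fracW: a => n1 m1 m1_0; elim/fracW: b => n2 m2 m2_0.
have M1 : tofrac m1 != 0 :> Kf by rewrite tofrac_eq0.
have M2 : tofrac m2 != 0 :> Kf by rewrite tofrac_eq0.
rewrite mulf_div -!tofracM !fderiv_frac ?mulf_neq0 //.
by rewrite !(derivationM hd) !tofracD !tofracM (quotient_ruleM _ _ _ _ _ _ M1 M2).
Qed.

Lemma fderiv_derivation : derivation (fderiv d).
Proof. exact: Derivation fderivD fderivM. Qed.

End FractionDerivation.

Section Model.
Context {R : rcfType}.
Local Notation C := R[i]%C.
Local Notation Pol := (Pol R).
Local Notation Kf := (Kf R).
Local Notation Z := (Zf R).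
Local Notation W := (Wf R).

HB.instance Definition _ :=
  GRing.RMorphism.copy (@cst R) (@tofrac Pol \o polyC \o polyC).

Lemma pdz_derivation : derivation (@pdz R).
Proof. by split=> p q; rewrite /pdz (derivD, derivM). Qed.

Lemma pdw_derivation : derivation (@pdw R).
Proof.
split=> p q; apply/polyP => i; rewrite /pdw ?coefD !coef_map /= ?coefD ?derivD //.
rewrite !coefM raddf_sum -big_split /=; apply: eq_bigr => j _.
by rewrite derivM !coef_map.
Qed.

Lemma pdz_pdw (p : Pol) : pdz (pdw p) = pdw (pdz p).
Proof. by apply/polyP => i; rewrite /pdw /pdz coef_deriv !coef_map /= coef_deriv derivMn. Qed.

Lemma dz_derivation : derivation (@dz R).
Proof. exact: fderiv_derivation pdz_derivation. Qed.

Lemma dzb_derivation : derivation (@dzb R).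
Proof. exact: fderiv_derivation pdw_derivation. Qed.

Lemma dz_tofrac (p : Pol) : dz (tofrac p) = tofrac (pdz p).
Proof. by rewrite /dz (fderiv_tofrac pdz_derivation). Qed.

Lemma dzb_tofrac (p : Pol) : dzb (tofrac p) = tofrac (pdw p).
Proof. by rewrite /dzb (fderiv_tofrac pdw_derivation). Qed.

Lemma dz_cst (c : C) : dz (cst c) = 0.
Proof. by rewrite dz_tofrac /pdz derivC tofrac0. Qed.

Lemma dzb_cst (c : C) : dzb (cst c) = 0.
Proof. by rewrite dzb_tofrac /pdw map_polyC /= derivC tofrac0. Qed.

Lemma dzZ : dz Z = 1.
Proof. by rewrite dz_tofrac /pdz derivX tofrac1. Qed.

Lemma dzW : dz W = 0.
Proof. by rewrite dz_tofrac /pdz derivC tofrac0. Qed.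

Lemma dzbZ : dzb Z = 0.
Proof.
rewrite dzb_tofrac /pdw.
have -> : map_poly (@deriv _) (polZ R) = 0.
  by apply/polyP => i; rewrite coef_map coefX coef0; case: (i == 1)%N; rewrite /= derivC.
exact: tofrac0.
Qed.

Lemma dzbW : dzb W = 1.
Proof. by rewrite dzb_tofrac /pdw map_polyC /= derivX tofrac1. Qed.

Lemma dz_dzb (f : Kf) : dz (dzb f) = dzb (dz f).
Proof.
apply/eqP; rewrite -subr_eq0; apply/eqP; move: f.
apply: frac_derivation_eq0; first exact: derivation_commutator dz_derivation dzb_derivation.
by move=> p; rewrite dzb_tofrac dz_tofrac dz_tofrac dzb_tofrac pdz_pdw subrr.
Qed.

Lemma Z_neq_W : Z - W != 0.
Proof.
rewrite -tofracB tofrac_eq0; apply/eqP => /(congr1 (fun p : Pol => p`_1)).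
by rewrite coefB coefX coefC /= subr0 coef0 => /eqP; rewrite oner_eq0.
Qed.

End Model.

Section FractionalMonomials.
Context {R : rcfType}.
Local Notation Kf := (Kf R).
Local Notation Z := (Zf R).
Local Notation W := (Wf R).

Definition u : Kf := (Z - W)^-1.
Definition mon n p q : Kf := Z ^+ p * W ^+ q * u ^+ n.

Lemma ZWu : (Z - W) * u = 1.
Proof. exact: mulfV Z_neq_W. Qed.

Lemma mon_frac n p q : Z ^+ p * W ^+ q / (Z - W) ^+ n = mon n p q.
Proof. by rewrite /mon /u exprVn. Qed.

Lemma mon_mul n p q m p' q' :
  mon n p q * mon m p' q' = mon (n + m) (p + p') (q + q').
Proof. by rewrite /mon !exprD; ring. Qed.

Lemma monX n p q k : mon n p q ^+ k = mon (n * k) (p * k) (q * k).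
Proof.
elim: k => [|k IH]; first by rewrite !muln0 /mon !expr0 !mulr1.
by rewrite exprS IH mon_mul !mulnS.
Qed.

Lemma mon_split n p q : mon n p q = mon n.+1 p.+1 q - mon n.+1 p q.+1.
Proof.
rewrite /mon !exprS.
by transitivity (Z ^+ p * W ^+ q * u ^+ n * ((Z - W) * u)); [rewrite ZWu mulr1 | ring].
Qed.

Lemma Z_mon n p q : Z * mon n p q = mon n p.+1 q.
Proof. by rewrite /mon exprS; ring. Qed.

Lemma W_mon n p q : W * mon n p q = mon n p q.+1.
Proof. by rewrite /mon exprS; ring. Qed.

End FractionalMonomials.

Section SpanA.
Context {R : rcfType}.
Local Notation Kf := (Kf R).
Local Notation u := (@u R).
Local Notation mon := (@mon R).

(* Unlike [in_An], the monomial with p = q = n is admitted (see [in_A_mon]). *)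
Inductive Aspan : Kf -> Prop :=
| Aspan0 : Aspan 0
| AspanD c n p q V :
    (p <= n)%N -> (q <= n)%N -> Aspan V -> Aspan (cst c * mon n p q + V).

Lemma Aspan_add a b : Aspan a -> Aspan b -> Aspan (a + b).
Proof.
elim=> [|c n p q V hp hq _ IH] hb; first by rewrite add0r.
by rewrite -addrA; apply: AspanD => //; exact: IH.
Qed.

Lemma Aspan_cst_mul c a : Aspan a -> Aspan (cst c * a).
Proof.
elim=> [|c' n p q V hp hq _ IH]; first by rewrite mulr0; exact: Aspan0.
by rewrite mulrDr mulrA -rmorphM; exact: AspanD.
Qed.

Lemma Aspan_opp a : Aspan a -> Aspan (- a).
Proof. by move=> ha; rewrite -mulN1r -(rmorphN1 (@cst R)); exact: Aspan_cst_mul. Qed.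

Lemma Aspan_sub a b : Aspan a -> Aspan b -> Aspan (a - b).
Proof. by move=> ha hb; apply: Aspan_add ha (Aspan_opp hb). Qed.

Lemma Aspan_natmul a k : Aspan a -> Aspan (a *+ k).
Proof. by move=> ha; rewrite -mulr_natl -(rmorph_nat (@cst R)); exact: Aspan_cst_mul. Qed.

Lemma Aspan_mon n p q : (p <= n)%N -> (q <= n)%N -> Aspan (mon n p q).
Proof.
move=> hp hq; rewrite -[mon _ _ _]addr0 -[mon _ _ _]mul1r -(rmorph1 (@cst R)).
exact: AspanD Aspan0.
Qed.

Lemma Aspan_u : Aspan u.
Proof.
rewrite (_ : u = mon 1 0 0); first exact: Aspan_mon.
by rewrite /mon !expr0 expr1 !mul1r.
Qed.

Lemma Aspan_mul a b : Aspan a -> Aspan b -> Aspan (a * b).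
Proof.
elim=> [|c n p q V hp hq _ IH] hb; first by rewrite mul0r; exact: Aspan0.
rewrite mulrDl; apply: Aspan_add (IH hb).
elim: hb => [|c' m p' q' V' hp' hq' _ IH']; first by rewrite mulr0; exact: Aspan0.
rewrite mulrDr; apply: Aspan_add IH'.
rewrite mulrACA -rmorphM mon_mul; apply/Aspan_cst_mul/Aspan_mon; exact: leq_add.
Qed.

Lemma Aspan1 : Aspan 1.
Proof.
have -> : 1 = mon 1 1 0 - mon 1 0 1 by rewrite -mon_split /mon !expr0 !mul1r.
by apply: Aspan_sub; exact: Aspan_mon.
Qed.

Lemma Aspan_derivation (L : Kf -> Kf) : derivation L -> (forall c, L (cst c) = 0) ->
  (forall n p q, (p <= n)%N -> (q <= n)%N -> Aspan (L (mon n p q))) ->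
  forall V, Aspan V -> Aspan (L V).
Proof.
move=> hL L_cst Lmon V; elim=> [|c n p q V' hp hq _ IH].
  by rewrite derivation0 //; exact: Aspan0.
rewrite (derivationD hL) (derivation_const_mul hL _ (L_cst c)).
by apply: Aspan_add IH; apply/Aspan_cst_mul/Lmon.
Qed.

Lemma Aspan_sum (I : Type) (r : seq I) (P : pred I) (F : I -> Kf) :
  (forall i, P i -> Aspan (F i)) -> Aspan (\sum_(i <- r | P i) F i).
Proof. by move=> hF; apply: (big_ind Aspan) => //; [exact: Aspan0 | exact: Aspan_add]. Qed.

Lemma in_A_Aspan V : in_A V -> Aspan V.
Proof.
case=> N [Vs [hVs ->]]; apply: Aspan_sum => n _.
have [c ->] := hVs n; apply: Aspan_sum => p _; apply: Aspan_sum => q _.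
by rewrite mon_frac; apply/Aspan_cst_mul/Aspan_mon; rewrite -ltnS.
Qed.

Lemma in_An0 n : in_An n (0 : Kf).
Proof.
exists (fun _ _ => 0); rewrite rmorph0; symmetry.
by apply: big1 => p _; apply: big1 => q _; rewrite mul0r.
Qed.

Lemma in_An_mon c n p q : (p <= n)%N -> (q <= n)%N -> (p, q) != (n, n) ->
  in_An n (cst c * mon n p q).
Proof.
move=> hp hq pq_nn; exists (fun p' q' => if (p' == p) && (q' == q) then c else 0).
have hp' : (p < n.+1)%N by []; have hq' : (q < n.+1)%N by [].
rewrite (bigD1 (Ordinal hp')) //= (bigD1 (Ordinal hq')) //= !eqxx mon_frac.
rewrite big1 ?addr0 => [|j /andP [_ /negbTE hj]]; last first.
  by rewrite -val_eqE /= in hj; rewrite hj andbF rmorph0 mul0r.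
rewrite big1 ?addr0 // => i /negbTE hi; apply: big1 => j _.
by rewrite -val_eqE /= in hi; rewrite hi rmorph0 mul0r.
Qed.

Lemma in_A_An n (V : Kf) : in_An n V -> in_A V.
Proof.
move=> hV; exists n.+1, (fun k => if k == n then V else 0); split.
  by move=> k; case: eqP => [-> | _]; [exact: hV | exact: in_An0].
rewrite big_ord_recr /= eqxx big1 ?add0r // => i _.
by rewrite ifN // neq_ltn ltn_ord.
Qed.

Lemma in_An_add n (a b : Kf) : in_An n a -> in_An n b -> in_An n (a + b).
Proof.
case=> c1 -> [c2 ->]; exists (fun p q => c1 p q + c2 p q).
rewrite -big_split; apply: eq_bigr => p _; rewrite -big_split; apply: eq_bigr => q _.
by rewrite rmorphD mulrDl.
Qed.

Lemma in_A_add (a b : Kf) : in_A a -> in_A b -> in_A (a + b).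
Proof.
case=> [N1 [V1 [hV1 ->]]] [N2 [V2 [hV2 ->]]].
pose pad N (V : nat -> Kf) k := if (k < N)%N then V k else 0.
have in_An_pad N V k : (forall n, in_An n (V n)) -> in_An k (pad N V k).
  by rewrite /pad => hV; case: ifP => _; [exact: hV | exact: in_An0].
exists (N1 + N2)%N, (fun k => pad N1 V1 k + pad N2 V2 k); split.
  by move=> k; apply: in_An_add; exact: in_An_pad.
by rewrite big_split /= -!big_mkcond -!big_ord_widen ?leq_addr ?leq_addl.
Qed.

Lemma in_A_mon c n p q : (p <= n)%N -> (q <= n)%N -> in_A (cst c * mon n p q).
Proof.
move=> hp hq; have [[-> ->]|pq_nn] := eqVneq (p, q) (n, n); last first.
  exact/in_A_An/in_An_mon.
rewrite mon_split mulrBr -mulNr -rmorphN.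
by apply: in_A_add; apply/in_A_An/in_An_mon; rewrite // xpair_eqE (ltn_eqF (ltnSn n)) ?andbF.
Qed.

Lemma Aspan_in_A V : Aspan V -> in_A V.
Proof.
elim=> [|c n p q V' hp hq _ IH]; last exact/in_A_add/IH/in_A_mon.
by exists 0%N, (fun _ => 0); split; [exact: in_An0 | rewrite big_ord0].
Qed.

End SpanA.

Section VectorFields.
Context {R : rcfType}.
Local Notation Z := (Zf R).
Local Notation W := (Wf R).
Local Notation u := (@u R).
Local Notation mon := (@mon R).
Local Notation Aspan := (@Aspan R).

Definition vector_field (L : Op R) :=
  L = @L1 R \/ L = @L2 R \/ L = @L3 R \/ L = @L1b R \/ L = @L2b R \/ L = @L3b R.

Lemma dz_u : dz u = - u ^+ 2.
Proof.
rewrite (derivationV dz_derivation Z_neq_W) (derivationB dz_derivation) dzZ dzW.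
by rewrite subr0 mulr1 /u exprVn.
Qed.

Lemma dzb_u : dzb u = u ^+ 2.
Proof.
rewrite (derivationV dzb_derivation Z_neq_W) (derivationB dzb_derivation) dzbZ dzbW.
by rewrite sub0r mulrN1 opprK /u exprVn.
Qed.

Lemma dz_mon n p q : dz (mon n p q) = mon n p.-1 q *+ p - mon n.+1 p q *+ n.
Proof.
rewrite /mon !(derivationM dz_derivation) !(derivationX dz_derivation) dzZ dzW dz_u.
by case: n => [|n]; rewrite /= ?mulr0n -?exprSr ?exprS; ring.
Qed.

Lemma dzb_mon n p q : dzb (mon n p q) = mon n p q.-1 *+ q + mon n.+1 p q *+ n.
Proof.
rewrite /mon !(derivationM dzb_derivation) !(derivationX dzb_derivation) dzbZ dzbW dzb_u.
by case: n => [|n]; rewrite /= ?mulr0n -?exprSr ?exprS; ring.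
Qed.

Lemma Z_dz_mon n p q : Z * dz (mon n p q) = mon n p q *+ p - mon n.+1 p.+1 q *+ n.
Proof. by rewrite dz_mon mulrBr !mulrnAr !Z_mon; case: p. Qed.

Lemma W_dzb_mon n p q : W * dzb (mon n p q) = mon n p q *+ q + mon n.+1 p q.+1 *+ n.
Proof. by rewrite dzb_mon mulrDr !mulrnAr !W_mon; case: q. Qed.

Lemma vector_field_derivation L : vector_field L -> derivation L.
Proof.
have dzM := derivation_mull dz_derivation; have dzbM := derivation_mull dzb_derivation.
by case=> [|[|[|[|[|]]]]] ->; [exact: dzM | exact: dzM | exact: dz_derivation
  | exact: dzbM | exact: dzbM | exact: dzb_derivation].
Qed.

Lemma vector_field_cst L c : vector_field L -> L (cst c) = 0.
Proof.
by case=> [|[|[|[|[|]]]]] ->; rewrite /L1 /L2 /L3 /L1b /L2b /L3b ?dz_cst ?dzb_cst ?mulr0.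
Qed.

Lemma Aspan_vector_field L V : vector_field L -> Aspan V -> Aspan (L V).
Proof.
move=> hL; apply: Aspan_derivation;
  [exact: vector_field_derivation | move=> c; exact: vector_field_cst |].
move=> n p q hp hq; case: hL => [|[|[|[|[|]]]]] ->; rewrite /L1 /L2 /L3 /L1b /L2b /L3b.
- rewrite expr2 -mulrA Z_dz_mon mulrBr !mulrnAr !Z_mon.
  have [pn|->] : (p < n)%N \/ p = n by lia.
    by apply: Aspan_sub; apply/Aspan_natmul/Aspan_mon; lia.
  rewrite (mon_split n n.+1 q) mulrnBl addrAC subrr add0r.
  by apply/Aspan_opp/Aspan_natmul/Aspan_mon; lia.
- by rewrite Z_dz_mon; apply: Aspan_sub; apply/Aspan_natmul/Aspan_mon; lia.
- by rewrite dz_mon; apply: Aspan_sub; apply/Aspan_natmul/Aspan_mon; lia.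
- rewrite expr2 -mulrA W_dzb_mon mulrDr !mulrnAr !W_mon.
  have [qn|->] : (q < n)%N \/ q = n by lia.
    by apply: Aspan_add; apply/Aspan_natmul/Aspan_mon; lia.
  by rewrite (mon_split n p n.+1) mulrnBl subrK; apply/Aspan_natmul/Aspan_mon; lia.
- by rewrite W_dzb_mon; apply: Aspan_add; apply/Aspan_natmul/Aspan_mon; lia.
- by rewrite dzb_mon; apply: Aspan_add; apply/Aspan_natmul/Aspan_mon; lia.
Qed.

End VectorFields.

Section OperatorSpans.
Context {R : rcfType}.
Local Notation Kf := (Kf R).
Local Notation Op := (Op R).

Inductive opspan (Coef : Kf -> Prop) (P : Op -> Prop) : Op -> Prop :=
| opspan0 : opspan Coef P (fun=> 0)
| opspanD V K D : Coef V -> P K -> opspan Coef P D -> opspan Coef P (fun f => V * K f + D f).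

Variables (Coef : Kf -> Prop) (P : Op -> Prop).

Lemma opspan_add D1 D2 :
  opspan Coef P D1 -> opspan Coef P D2 -> opspan Coef P (fun f => D1 f + D2 f).
Proof.
elim=> [|V K D hV hK _ IH] h2.
  rewrite (_ : (fun f => 0 + D2 f) = D2) //.
  by apply: functional_extensionality => f; rewrite add0r.
rewrite (_ : (fun f => _) = fun f => V * K f + (D f + D2 f)); first exact: opspanD hV hK (IH h2).
by apply: functional_extensionality => f; rewrite addrA.
Qed.

Lemma opspan_mull (Coef' : Kf -> Prop) A D : (forall V, Coef V -> Coef' (A * V)) ->
  opspan Coef P D -> opspan Coef' P (fun f => A * D f).
Proof.
move=> hA; elim=> [|V K D' hV hK _ IH].
  rewrite (_ : (fun f => A * 0) = fun=> 0); first exact: opspan0.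
  by apply: functional_extensionality => f; rewrite mulr0.
rewrite (_ : (fun f => _) = fun f => A * V * K f + A * D' f); first exact: opspanD (hA _ hV) hK IH.
by apply: functional_extensionality => f; rewrite mulrDr mulrA.
Qed.

Lemma opspan_gen K : Coef 1 -> P K -> opspan Coef P K.
Proof.
move=> h1 hK; rewrite (_ : K = fun f => 1 * K f + 0); first exact: opspanD h1 hK (opspan0 _ _).
by apply: functional_extensionality => f; rewrite mul1r addr0.
Qed.

Lemma opspan_mono (Q : Op -> Prop) D : (forall K, P K -> Q K) -> opspan Coef P D -> opspan Coef Q D.
Proof.
by move=> PQ; elim=> [|V K D' hV hK _ IH]; [exact: opspan0 | exact: opspanD (PQ _ hK) IH].
Qed.

End OperatorSpans.

Section ConstantSpans.
Context {R : rcfType}.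
Local Notation Kf := (Kf R).

Definition is_cst (V : Kf) := exists c, V = cst c.
Local Notation cspan := (opspan is_cst).

Lemma cspan_gen P K : P K -> cspan P K.
Proof. by apply: opspan_gen; exists 1; rewrite rmorph1. Qed.

Lemma cspan_cst_mul P c D : cspan P D -> cspan P (fun f => cst c * D f).
Proof. by apply: opspan_mull => _ [c' ->]; exists (c * c'); rewrite rmorphM. Qed.

Lemma cspan_natmul P k D : cspan P D -> cspan P (fun f => D f *+ k).
Proof.
move=> hD; rewrite (_ : (fun f => _) = fun f => cst k%:R * D f); first exact: cspan_cst_mul.
by apply: functional_extensionality => f; rewrite rmorph_nat mulr_natl.
Qed.

Lemma cspan_derivation (L : Kf -> Kf) P Q D :
  derivation L -> (forall c, L (cst c) = 0) ->
  (forall K, P K -> cspan Q (fun f => L (K f))) ->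
  cspan P D -> cspan Q (fun f => L (D f)).
Proof.
move=> hL L_cst LP; elim=> [|V K D' [c ->] hK _ IH].
  rewrite (_ : (fun f => L 0) = fun=> 0); first exact: opspan0.
  by apply: functional_extensionality => f; rewrite derivation0.
rewrite (_ : (fun f => _) = fun f => cst c * L (K f) + L (D' f)).
  by apply: opspan_add IH; apply/cspan_cst_mul/LP.
apply: functional_extensionality => f.
by rewrite (derivationD hL) (derivation_const_mul hL _ (L_cst c)).
Qed.

End ConstantSpans.

Section Words.
Context {R : rcfType}.
Local Notation Kf := (Kf R).
Local Notation Op := (Op R).
Local Notation cspan := (opspan is_cst).

Variables (de : Kf -> Kf) (z : Kf) (X : Op).
Hypotheses (hde : derivation de) (de_cst : forall c, de (cst c) = 0) (dez : de z = 1).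

Local Notation quad := (quad_op de z).
Local Notation euler := (euler_op de z).

Definition word a b g : Op := fun f => iter a quad (iter b euler (iter g de (X f))).
Definition is_word K := exists a b g, K = word a b g.

Let quad_derivation : derivation quad := derivation_mull hde _.
Let euler_derivation : derivation euler := derivation_mull hde _.
(* [exact: mulr0] rather than [rewrite mulr0]: the two zeros of [Kf] come from
   different instance paths, and closing [0 = 0] by conversion would unfold the
   fraction field. *)
Let quad_cst c : quad (cst c) = 0. Proof. by rewrite /quad_op de_cst; exact: mulr0. Qed.
Let euler_cst c : euler (cst c) = 0. Proof. by rewrite /euler_op de_cst; exact: mulr0. Qed.

Lemma euler_iter_quad a h :
  euler (iter a quad h) = iter a quad (euler h) + iter a quad h *+ a.
Proof.
elim: a => [|a IH] /=; first by rewrite mulr0n addr0.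
rewrite euler_quad // IH (derivationD quad_derivation) (derivationMn quad_derivation).
by rewrite mulrSr addrA.
Qed.

Lemma cspan_word_quad D : cspan is_word D -> cspan is_word (fun f => quad (D f)).
Proof.
apply: cspan_derivation quad_derivation quad_cst _ => _ [a [b [g ->]]].
by apply: cspan_gen; exists a.+1, b, g.
Qed.

Lemma cspan_word_euler D : cspan is_word D -> cspan is_word (fun f => euler (D f)).
Proof.
apply: cspan_derivation euler_derivation euler_cst _ => _ [a [b [g ->]]].
rewrite (_ : (fun f => _) = fun f => word a b.+1 g f + word a b g f *+ a).
  apply: opspan_add; [|apply: cspan_natmul]; apply: cspan_gen.
    by exists a, b.+1, g.
  by exists a, b, g.
by apply: functional_extensionality => f; rewrite /word euler_iter_quad.
Qed.

Lemma cspan_deriv_word a b g : cspan is_word (fun f => de (word a b g f)).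
Proof.
elim: a b g => [|a IHa] b g.
  elim: b g => [|b IHb] g; first by apply: cspan_gen; exists 0%N, 0%N, g.+1.
  rewrite (_ : (fun f => _) = fun f => euler (de (word 0 b g f)) + de (word 0 b g f)).
    by apply: opspan_add (IHb g); apply: cspan_word_euler.
  by apply: functional_extensionality => f; rewrite /word /= deriv_euler.
rewrite (_ : (fun f => _) = fun f => quad (de (word a b g f)) + euler (word a b g f) *+ 2).
  apply: opspan_add; first exact: cspan_word_quad.
  by apply/cspan_natmul/cspan_word_euler/cspan_gen; exists a, b, g.
by apply: functional_extensionality => f; rewrite /word /= deriv_quad.
Qed.

Lemma cspan_word_deriv D : cspan is_word D -> cspan is_word (fun f => de (D f)).
Proof. by apply: cspan_derivation hde de_cst _ => _ [a [b [g ->]]]; exact: cspan_deriv_word. Qed.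

End Words.

Section MonomialOperators.
Context {R : rcfType}.
Local Notation Kf := (Kf R).
Local Notation Op := (Op R).
Local Notation Z := (Zf R).
Local Notation W := (Wf R).
Local Notation dz := (@dz R).
Local Notation dzb := (@dzb R).

Definition is_monomial (K : Op) :=
  exists a b g a' b' g', K = monomial_op a b g a' b' g'.

Lemma monomial_op_word a b g a' b' g' :
  monomial_op a b g a' b' g' = word dz Z (word dzb W id a' b' g') a b g.
Proof. by []. Qed.

Lemma iter_commute (U V : Op) n :
  (forall f, U (V f) = V (U f)) -> forall f, iter n U (V f) = V (iter n U f).
Proof. by move=> UV; elim: n => [//|n IH] f /=; rewrite IH UV. Qed.

Lemma mul_deriv_commute (A B : Kf) f : dzb A = 0 -> dz B = 0 ->
  B * dzb (A * dz f) = A * dz (B * dzb f).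
Proof.
move=> dzbA dzB.
rewrite (derivationM dzb_derivation) (derivationM dz_derivation) dzbA dzB dz_dzb.
by rewrite !mul0r !add0r; exact: mulrCA.
Qed.

Lemma word_commute (V : Op) B a b g : dz B = 0 -> (forall f, V f = B * dzb f) ->
  forall f, V (word dz Z id a b g f) = word dz Z id a b g (V f).
Proof.
move=> dzB Vdef f; have commute A h : dzb A = 0 -> A * dz (V h) = V (A * dz h).
  by move=> dzbA; rewrite !Vdef mul_deriv_commute.
have cquad h : quad_op dz Z (V h) = V (quad_op dz Z h).
  by apply: commute; rewrite (derivationX dzb_derivation) dzbZ mulr0 mul0rn.
have ceuler h : euler_op dz Z (V h) = V (euler_op dz Z h) by exact: commute dzbZ.
have cdz h : dz (V h) = V (dz h).
  by rewrite -[dz (V h)]mul1r -[dz h]mul1r commute ?(derivation1 dzb_derivation).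
by rewrite /word -(iter_commute a cquad) -(iter_commute b ceuler) -(iter_commute g cdz).
Qed.

Lemma monomial_op_swap a b g a' b' g' :
  monomial_op a b g a' b' g' = word dzb W (word dz Z id a b g) a' b' g'.
Proof.
apply: functional_extensionality => f; set wz := word dz Z id a b g.
have cquad h : quad_op dzb W (wz h) = wz (quad_op dzb W h).
  apply: (word_commute (B := W ^+ 2)) => //.
  by rewrite (derivationX dz_derivation) dzW mulr0 mul0rn.
have ceuler h : euler_op dzb W (wz h) = wz (euler_op dzb W h).
  by apply: (word_commute (B := W)); first exact: dzW.
have cdzb h : dzb (wz h) = wz (dzb h).
  apply: (word_commute (B := 1)); first exact: derivation1 dz_derivation.
  by move=> ?; rewrite mul1r.
by rewrite /word (iter_commute g' cdzb) (iter_commute b' ceuler) (iter_commute a' cquad).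
Qed.

End MonomialOperators.

Section SpanB.
Context {R : rcfType}.
Local Notation Kf := (Kf R).
Local Notation Op := (Op R).
Local Notation Z := (Zf R).
Local Notation W := (Wf R).
Local Notation cspan := (opspan is_cst).
Local Notation dz := (@dz R).
Local Notation dzb := (@dzb R).

Lemma cspan_monomial_vector_field (L D : Op) : vector_field L ->
  cspan is_monomial D -> cspan is_monomial (fun f => L (D f)).
Proof.
move=> hL; apply: cspan_derivation;
  [exact: vector_field_derivation | move=> c; exact: vector_field_cst |].
move=> _ [a [b [g [a' [b' [g' ->]]]]]].
have unbarred K : cspan (is_word dz Z (word dzb W id a' b' g')) K -> cspan is_monomial K.
  by apply: opspan_mono => _ [a2 [b2 [g2 ->]]]; exists a2, b2, g2, a', b', g'.
have barred K : cspan (is_word dzb W (word dz Z id a b g)) K -> cspan is_monomial K.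
  apply: opspan_mono => _ [a2 [b2 [g2 ->]]].
  by exists a, b, g, a2, b2, g2; rewrite monomial_op_swap.
have wz : cspan (is_word dz Z (word dzb W id a' b' g')) (monomial_op a b g a' b' g').
  by apply: cspan_gen; exists a, b, g; exact: monomial_op_word.
have ww : cspan (is_word dzb W (word dz Z id a b g)) (monomial_op a b g a' b' g').
  by apply: cspan_gen; exists a', b', g'; rewrite monomial_op_swap.
case: hL => [|[|[|[|[|]]]]] ->.
- exact/unbarred/(cspan_word_quad dz_derivation dz_cst wz).
- exact/unbarred/(cspan_word_euler dz_derivation dz_cst dzZ wz).
- exact/unbarred/(cspan_word_deriv dz_derivation dz_cst dzZ wz).
- exact/barred/(cspan_word_quad dzb_derivation dzb_cst ww).
- exact/barred/(cspan_word_euler dzb_derivation dzb_cst dzbW ww).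
- exact/barred/(cspan_word_deriv dzb_derivation dzb_cst dzbW ww).
Qed.

Definition Bspan := opspan (@Aspan R) is_monomial.

Lemma Bspan_add (D1 D2 : Op) : Bspan D1 -> Bspan D2 -> Bspan (fun f => D1 f + D2 f).
Proof. exact: opspan_add. Qed.

Lemma Bspan_mull (A : Kf) (D : Op) : Aspan A -> Bspan D -> Bspan (fun f => A * D f).
Proof. by move=> hA; apply: opspan_mull => V; exact: Aspan_mul. Qed.

Lemma Bspan_cst_mul c (D : Op) : Bspan D -> Bspan (fun f => cst c * D f).
Proof. by apply: opspan_mull => V; exact: Aspan_cst_mul. Qed.

Lemma Bspan_id : Bspan (id : Op).
Proof. by apply: opspan_gen; [exact: Aspan1 | exists 0%N, 0%N, 0%N, 0%N, 0%N, 0%N]. Qed.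

Lemma Bspan_vector_field (L D : Op) : vector_field L -> Bspan D -> Bspan (fun f => L (D f)).
Proof.
move=> hL; have hLd := vector_field_derivation hL; have [LD LM] := hLd.
elim=> [|V K D' hV hK _ IH].
  rewrite (_ : (fun f => L 0) = fun=> 0); first exact: opspan0.
  by apply: functional_extensionality => f; rewrite (derivation0 hLd).
rewrite (_ : (fun f => _) = fun f => L V * K f + (V * L (K f) + L (D' f))).
  apply: (opspanD (Aspan_vector_field hL hV) hK (Bspan_add _ IH)).
  apply: opspan_mull (cspan_monomial_vector_field hL (cspan_gen hK)) => _ [c ->].
  by rewrite mulrC; apply/Aspan_cst_mul.
by apply: functional_extensionality => f; rewrite LD LM addrA.
Qed.

End SpanB.

Section Generation.
Context {R : rcfType}.
Local Notation C := R[i]%C.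
Local Notation Op := (Op R).
Local Notation Z := (Zf R).
Local Notation W := (Wf R).
Local Notation u := (@u R).
Local Notation mon := (@mon R).
Local Notation gen := (alg_gen (@B_gens R)).

Lemma in_B_Bspan (D : Op) : in_B D -> Bspan D.
Proof.
case=> s [hs ->]; elim: s hs => [|t s IH] hs.
  rewrite (_ : (fun f => _) = fun=> 0); first exact: opspan0.
  by apply: functional_extensionality => f; rewrite big_nil.
rewrite (_ : (fun f => _) = fun f => t.2 * monomial_op t.1.1.1.1.1.1 t.1.1.1.1.1.2
    t.1.1.1.1.2 t.1.1.1.2 t.1.1.2 t.1.2 f + \sum_(t0 <- s) t0.2 * monomial_op
    t0.1.1.1.1.1.1 t0.1.1.1.1.1.2 t0.1.1.1.1.2 t0.1.1.1.2 t0.1.1.2 t0.1.2 f).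
  apply: opspanD; first exact/in_A_Aspan/hs/mem_head.
    by do 6!eexists.
  by apply: IH => t' ht'; apply: hs; rewrite in_cons ht' orbT.
by apply: functional_extensionality => f; rewrite big_cons.
Qed.

Lemma Bspan_in_B (D : Op) : Bspan D -> in_B D.
Proof.
elim=> [|V K D' hV [a [b [g [a' [b' [g' ->]]]]]] _ [s [hs ->]]].
  by exists [::]; split=> //; apply: functional_extensionality => f; rewrite big_nil.
exists ((a, b, g, a', b', g', V) :: s); split.
  by move=> t; rewrite in_cons => /orP [/eqP -> | /hs //]; exact: Aspan_in_A.
by apply: functional_extensionality => f; rewrite big_cons.
Qed.

Lemma alg_gen_mono (G H : Op -> Prop) (D : Op) :
  (forall E, G E -> alg_gen H E) -> alg_gen G D -> alg_gen H D.
Proof.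
move=> GH; elim=> [E /GH // | | ? ? _ h1 _ h2 | c ? _ h | ? ? _ h1 _ h2].
- exact: ag_id.
- exact: ag_add h1 h2.
- exact: ag_scale c _ h.
- exact: ag_comp h1 h2.
Qed.

Lemma gen_vector_field L : vector_field L -> gen L.
Proof. by move=> hL; apply: ag_base; right. Qed.

Lemma gen_iter (L X : Op) n : gen L -> gen X -> gen (fun f => iter n L (X f)).
Proof. by move=> hL hX; elim: n => [//|n IH]; exact: (ag_comp hL IH). Qed.

Lemma gen_mulopD a b : gen (mulop a) -> gen (mulop b) -> gen (mulop (a + b)).
Proof.
move=> ha hb; rewrite (_ : mulop _ = op_add (mulop a) (mulop b)); first exact: ag_add.
by apply: functional_extensionality => f; rewrite /mulop /op_add mulrDl.
Qed.

Lemma gen_mulopM a b : gen (mulop a) -> gen (mulop b) -> gen (mulop (a * b)).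
Proof.
move=> ha hb; rewrite (_ : mulop _ = op_comp (mulop a) (mulop b)); first exact: ag_comp.
by apply: functional_extensionality => f; rewrite /mulop /op_comp mulrA.
Qed.

Lemma gen_mulop_cst_mul c a : gen (mulop a) -> gen (mulop (cst c * a)).
Proof.
move=> ha; rewrite (_ : mulop _ = op_scale c (mulop a)); first exact: ag_scale.
by apply: functional_extensionality => f; rewrite /mulop /op_scale mulrA.
Qed.

Lemma gen_mulop1 : gen (mulop 1).
Proof.
rewrite (_ : mulop 1 = @op_id R); first exact: ag_id.
by apply: functional_extensionality => f; rewrite /mulop mul1r.
Qed.

Lemma gen_mulopN a : gen (mulop a) -> gen (mulop (- a)).
Proof. by move=> ha; rewrite -mulN1r -(rmorphN1 (@cst R)); exact: gen_mulop_cst_mul. Qed.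

Lemma gen_mulopX a k : gen (mulop a) -> gen (mulop (a ^+ k)).
Proof.
by move=> ha; elim: k => [|k IH]; [exact: gen_mulop1 | rewrite exprS; exact: gen_mulopM].
Qed.

Lemma gen_mulop_u : gen (mulop u).
Proof. by rewrite /u -div1r; apply: ag_base; left. Qed.

Lemma gen_mulop_vector_field L a : vector_field L -> gen (mulop a) -> gen (mulop (L a)).
Proof.
move=> hL ha; have [_ LM] := vector_field_derivation hL.
rewrite (_ : mulop _ = op_add (op_comp L (mulop a)) (op_scale (-1) (op_comp (mulop a) L))).
  by apply: ag_add; [|apply: ag_scale]; apply: ag_comp => //; exact: gen_vector_field.
apply: functional_extensionality => f.
by rewrite /mulop /op_add /op_comp /op_scale LM rmorphN1 mulN1r addrK.
Qed.

Lemma mon_factor n p q : (p <= n)%N -> (q <= n)%N -> exists k a b c,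
  mon n p q = mon 1 1 1 ^+ k * mon 1 1 0 ^+ a * mon 1 0 1 ^+ b * mon 1 0 0 ^+ c.
Proof.
move=> hp hq; have [pq_n|n_pq] := leqP (p + q) n.
  by exists 0%N, p, q, (n - (p + q))%N; rewrite !monX !mon_mul; congr mon; lia.
by exists (p + q - n)%N, (n - q)%N, (n - p)%N, 0%N; rewrite !monX !mon_mul; congr mon; lia.
Qed.

Lemma Wu_Zu : W * u = Z * u - 1.
Proof. by rewrite -ZWu; ring. Qed.

Lemma gen_mulop_Zu : gen (mulop (Z * u)).
Proof.
have gen_Zu2 : gen (mulop ((Z * u) ^+ 2)).
  rewrite exprMn -[_ * _]opprK -mulrN -dz_u; apply/gen_mulopN.
  exact: (gen_mulop_vector_field (or_introl erefl) gen_mulop_u).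
have gen_Wu2 : gen (mulop ((W * u) ^+ 2)).
  rewrite exprMn -dzb_u.
  exact: (gen_mulop_vector_field (or_intror (or_intror (or_intror (or_introl erefl)))) gen_mulop_u).
have two0 : (2%:R : C) != 0 by rewrite pnatr_eq0.
(* (zu)^2 - (wu)^2 = (z - w) u (zu + wu) = 2 zu - 1 *)
have -> : Z * u = cst 2%:R^-1 * ((Z * u) ^+ 2 - (W * u) ^+ 2 + 1).
  rewrite Wu_Zu (_ : _ - _ + 1 = cst 2%:R * (Z * u)); last by rewrite rmorph_nat; ring.
  by rewrite mulrA -rmorphM mulVf // rmorph1 mul1r.
by apply/gen_mulop_cst_mul/gen_mulopD/gen_mulop1; apply/gen_mulopD/gen_mulopN.
Qed.

Lemma gen_mulop_ZWu : gen (mulop (Z * W * u)).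
Proof.
have -> : Z * W * u = - (L1 (Z * u) + L1b (Z * u)).
  apply/eqP; rewrite -subr_eq0; apply/eqP.
  rewrite /L1 /L1b !(derivationM dz_derivation) !(derivationM dzb_derivation).
  rewrite dzZ dzbZ dz_u dzb_u.
  transitivity (Z * u * (Z + W) * (1 - (Z - W) * u)); first by ring.
  by rewrite ZWu subrr; exact: mulr0.
apply/gen_mulopN/gen_mulopD; apply: gen_mulop_vector_field gen_mulop_Zu.
  by left.
by right; right; right; left.
Qed.

Lemma gen_mulop_mon n p q : (p <= n)%N -> (q <= n)%N -> gen (mulop (mon n p q)).
Proof.
move=> hp hq; have [k [a [b [c ->]]]] := mon_factor hp hq.
apply/gen_mulopM/gen_mulopX; last by rewrite /mon expr0 expr1 !mul1r; exact: gen_mulop_u.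
apply/gen_mulopM/gen_mulopX; last first.
  rewrite /mon expr0 !expr1 mul1r Wu_Zu.
  by apply/gen_mulopD/gen_mulopN/gen_mulop1; exact: gen_mulop_Zu.
apply/gen_mulopM/gen_mulopX; last by rewrite /mon expr0 !expr1 mulr1; exact: gen_mulop_Zu.
by apply: gen_mulopX; rewrite /mon !expr1; exact: gen_mulop_ZWu.
Qed.

Lemma gen_mulop_Aspan V : Aspan V -> gen (mulop V).
Proof.
elim=> [|c n p q V' hp hq _ IH]; last exact/gen_mulopD/IH/gen_mulop_cst_mul/gen_mulop_mon.
by rewrite -(mul0r 1) -(rmorph0 (@cst R)); exact/gen_mulop_cst_mul/gen_mulop1.
Qed.

End Generation.

Section Equivalence.
Context {R : rcfType}.
Local Notation Kf := (Kf R).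
Local Notation Op := (Op R).
Local Notation gen := (alg_gen (@B_gens R)).

Lemma Bspan_gen (D : Op) : Bspan D -> gen D.
Proof.
elim=> [|V K D' hV [a [b [g [a' [b' [g' ->]]]]]] _ IH].
  rewrite (_ : (fun=> 0) = op_scale 0 (@op_id R)); first exact/ag_scale/ag_id.
  apply: functional_extensionality => f; rewrite /op_scale rmorph0; exact/esym/mul0r.
apply: (ag_add _ IH); apply: (ag_comp (gen_mulop_Aspan hV)).
have gL1 : gen (@L1 R) by apply: gen_vector_field; left.
have gL2 : gen (@L2 R) by apply: gen_vector_field; right; left.
have gL3 : gen (@L3 R) by apply: gen_vector_field; right; right; left.
have gL1b : gen (@L1b R) by apply: gen_vector_field; right; right; right; left.
have gL2b : gen (@L2b R) by apply: gen_vector_field; right; right; right; right; left.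
have gL3b : gen (@L3b R) by apply: gen_vector_field; right; right; right; right; right.
by do 6!apply: gen_iter => //; exact: ag_id.
Qed.

Lemma gen_comp_Bspan (D1 : Op) : gen D1 -> forall D2, Bspan D2 -> Bspan (op_comp D1 D2).
Proof.
elim=> [D [-> | hL] | | D D' _ IH _ IH' | c D _ IH | D D' _ IH _ IH'] D2 h2.
- by apply: Bspan_mull h2; rewrite div1r; exact: Aspan_u.
- exact: Bspan_vector_field.
- exact: h2.
- exact: Bspan_add (IH _ h2) (IH' _ h2).
- exact: Bspan_cst_mul (IH _ h2).
- exact: IH (IH' _ h2).
Qed.

Lemma gen_Bspan (D : Op) : gen D -> Bspan D.
Proof. by move=> hD; exact: gen_comp_Bspan hD _ Bspan_id. Qed.

Lemma vector_field_diffop (L : Op) : vector_field L -> is_diffop L.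
Proof.
have dz_op : is_diffop (@dz R) by apply: ag_base; right; left.
have dzb_op : is_diffop (@dzb R) by apply: ag_base; right; right.
have mulop_op (a : Kf) : is_diffop (mulop a) by apply: ag_base; left; exists a.
by case=> [|[|[|[|[|]]]]] ->;
  [ apply: (ag_comp (mulop_op _) dz_op) | apply: (ag_comp (mulop_op _) dz_op) | exact: dz_op
  | apply: (ag_comp (mulop_op _) dzb_op) | apply: (ag_comp (mulop_op _) dzb_op) | exact: dzb_op].
Qed.

End Equivalence.

Theorem theorem2 (R : rcfType) :
  (* B is a subalgebra of the algebra of differential operators *)
  (forall D : Op R, in_B D -> is_diffop D) /\
  in_B (@op_id R) /\
  (forall D1 D2 : Op R, in_B D1 -> in_B D2 -> in_B (op_add D1 D2)) /\
  (forall (c : R[i]%C) (D : Op R), in_B D -> in_B (op_scale c D)) /\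
  (forall D1 D2 : Op R, in_B D1 -> in_B D2 -> in_B (op_comp D1 D2)) /\
  (* B is generated by the seven operators *)
  (forall D : Op R, in_B D <-> alg_gen (@B_gens R) D).
Proof.
have in_B_gen (D : Op R) : in_B D <-> alg_gen (@B_gens R) D.
  by split=> [/in_B_Bspan/Bspan_gen | /gen_Bspan/Bspan_in_B].
split.
  move=> D /in_B_gen; apply: alg_gen_mono => _ [-> | /vector_field_diffop //].
  by apply: ag_base; left; eexists.
split; first exact/in_B_gen/ag_id.
split; first by move=> D1 D2 /in_B_gen h1 /in_B_gen h2; apply/in_B_gen/ag_add.
split; first by move=> c D /in_B_gen h; apply/in_B_gen/ag_scale.
split; first by move=> D1 D2 /in_B_gen h1 /in_B_gen h2; apply/in_B_gen/ag_comp.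
exact: in_B_gen.
Qed.
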